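(* Let $K$ be an arc of bounded rotation in $\mathbb{C}=\mathbb{R}^2$ and let $z=(z_1,z_2):[0,s(K)]\to\mathbb{R}^2$ be its arc length parameterization. Then $z$ is $\delta$-convex: each component $z_i$ ($i=1,2$) can be written as $z_i=g_i-f_i$ where $g_i,f_i:[0,s(K)]\to\mathbb{R}$ are continuous convex functions.
   Context: An arc is the image of a continuous injective map $[a,b]\to\mathbb{C}$, up to increasing reparameterization. A broken line inscribed in $K$ has the same extremities as $K$ and vertices on $K$ ordered along $K$. The absolute rotation of a broken line is the sum over interior vertices of angles in $[0,\pi]$ between directions of consecutive segments; $|\kappa|(K)$ is the supremum of absolute rotations of inscribed broken lines, and $K$ has bounded rotation if $|\kappa|(K)<\infty$. $s(K)$ is the Euclidean length, and the arc length parameterization satisfies $t_2-t_1=s(K|_{t_1,t_2})$. *)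

From Stdlib Require Import Reals Lra.
Open Scope R_scope.

Definition pt : Type := (R * R)%type.

Definition psub (p q : pt) : pt := (fst p - fst q, snd p - snd q).
Definition dot (u v : pt) : R := fst u * fst v + snd u * snd v.
Definition pnorm (u : pt) : R := sqrt (dot u u).
Definition pdist (p q : pt) : R := pnorm (psub p q).

Definition angle (u v : pt) : R := acos (dot u v / (pnorm u * pnorm v)).

(** [rsum f m n] = f m + f (m+1) + ... + f (n-1)  (0 if n <= m). *)
Fixpoint rsum_aux (f : nat -> R) (m k : nat) : R :=
  match k with
  | O => 0
  | S k' => f m + rsum_aux f (S m) k'
  end.
Definition rsum (f : nat -> R) (m n : nat) : R := rsum_aux f m (n - m).

Definition partition (a b : R) (t : nat -> R) (n : nat) : Prop :=
  (1 <= n)%nat /\ t O = a /\ t n = b /\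
  (forall i, (i < n)%nat -> t i < t (S i)).

Definition continuous_on (a b : R) (f : R -> R) : Prop :=
  forall x, a <= x <= b -> forall eps, 0 < eps -> exists delta, 0 < delta /\
    forall y, a <= y <= b -> Rabs (y - x) < delta -> Rabs (f y - f x) < eps.

Definition pcontinuous_on (a b : R) (g : R -> pt) : Prop :=
  continuous_on a b (fun t => fst (g t)) /\ continuous_on a b (fun t => snd (g t)).

Definition is_arc (gamma : R -> pt) (a b : R) : Prop :=
  a < b /\ pcontinuous_on a b gamma /\
  (forall x y, a <= x <= b -> a <= y <= b -> gamma x = gamma y -> x = y).

Definition polylen (gamma : R -> pt) (t : nat -> R) (n : nat) : R :=
  rsum (fun i => pdist (gamma (t (S i))) (gamma (t i))) 0 n.

(** Absolute rotation of the inscribed broken line: sum over the interior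
    vertices gamma (t i), 1 <= i <= n-1, of the angle in [0,pi] between the
    directions of the consecutive segments. *)
Definition abs_rotation (gamma : R -> pt) (t : nat -> R) (n : nat) : R :=
  rsum (fun i => angle (psub (gamma (t i)) (gamma (t (pred i))))
                       (psub (gamma (t (S i))) (gamma (t i)))) 1 n.

(** Bounded rotation: |kappa|(K) = sup of absolute rotations < +oo. *)
Definition bounded_rotation (gamma : R -> pt) (a b : R) : Prop :=
  exists M, forall t n, partition a b t n -> abs_rotation gamma t n <= M.

Definition is_length (gamma : R -> pt) (c d l : R) : Prop :=
  is_lub (fun x => exists t n, partition c d t n /\ x = polylen gamma t n) l.

Definition arc_length_param (gamma : R -> pt) (a b : R) (z : R -> pt) (L : R) : Prop :=
  (exists phi : R -> R,
     phi 0 = a /\ phi L = b /\ continuous_on 0 L phi /\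
     (forall s1 s2, 0 <= s1 -> s1 < s2 -> s2 <= L -> phi s1 < phi s2) /\
     (forall s, 0 <= s <= L -> z s = gamma (phi s))) /\
  (forall t1 t2, 0 <= t1 -> t1 < t2 -> t2 <= L -> is_length z t1 t2 (t2 - t1)).

Definition convex_on (a b : R) (f : R -> R) : Prop :=
  forall x y lam, a <= x <= b -> a <= y <= b -> 0 <= lam <= 1 ->
    f (lam * x + (1 - lam) * y) <= lam * f x + (1 - lam) * f y.

Definition delta_convex_on (a b : R) (h : R -> R) : Prop :=
  exists g f : R -> R,
    continuous_on a b g /\ convex_on a b g /\
    continuous_on a b f /\ convex_on a b f /\
    (forall s, a <= s <= b -> h s = g s - f s).

(* Let z : [0, L] -> R^2 parameterize the arc by arc length, with every
   inscribed broken line of rotation at most M, and let c = <w, z> be the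
   coordinate along a unit vector w; c is 1-Lipschitz.  On the uniform grid
   with n cells, the slope of c on cell k is rho_k <w, e_k>, where e_k is the
   unit direction of the k-th chord and rho_k <= 1 the ratio chord / arc.  The
   chord-arc inequality (1 - rotation) * length <= chord, applied to broken
   lines inscribed in the cells, gives sum_k (1 - rho_k) <= M + 1, and
   |e_k - e_(k-1)| is at most the turning angle; so the slopes of c have total
   variation at most 3 M + 2, uniformly in n.  The grid interpolation of c is
   an affine function plus hinges weighted by the slope jumps; splitting the
   jumps by sign writes it as G_n - F_n with G_n, F_n convex and uniformly
   Lipschitz, and G_n - F_n -> c.  Hence limsup G_n and limsup F_n are
   continuous convex functions with difference c. *)

From Stdlib Require Import Reals Lra Lia Classical.
From Coquelicot Require Rbar Lim_seq.
Open Scope R_scope.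

Lemma rsum_aux_ext f g m k : (forall i, (m <= i < m + k)%nat -> f i = g i) ->
  rsum_aux f m k = rsum_aux g m k.
Proof.
  revert m; induction k as [|k IH]; intros m H; simpl; [reflexivity|].
  rewrite (H m) by lia. f_equal. apply IH. intros i Hi; apply H; lia.
Qed.

Lemma rsum_ext f g m n : (forall i, (m <= i < n)%nat -> f i = g i) ->
  rsum f m n = rsum g m n.
Proof. intros H; apply rsum_aux_ext; intros i Hi; apply H; lia. Qed.

Lemma rsum_empty f m n : (n <= m)%nat -> rsum f m n = 0.
Proof. intros H; unfold rsum; replace (n - m)%nat with 0%nat by lia; reflexivity. Qed.

Lemma rsum_first f m n : (m < n)%nat -> rsum f m n = f m + rsum f (S m) n.
Proof. intros H; unfold rsum; replace (n - m)%nat with (S (n - S m)) by lia; reflexivity. Qed.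

Lemma rsum_aux_last f m k : rsum_aux f m (S k) = rsum_aux f m k + f (m + k)%nat.
Proof.
  revert m; induction k as [|k IH]; intros m; simpl.
  - rewrite Nat.add_0_r; ring.
  - simpl in IH. rewrite IH. replace (S m + k)%nat with (m + S k)%nat by lia. ring.
Qed.

Lemma rsum_last f m n : (m <= n)%nat -> rsum f m (S n) = rsum f m n + f n.
Proof.
  intros H; unfold rsum. replace (S n - m)%nat with (S (n - m)) by lia.
  rewrite rsum_aux_last. do 2 f_equal. lia.
Qed.

Lemma rsum_split f m p n : (m <= p <= n)%nat -> rsum f m n = rsum f m p + rsum f p n.
Proof.
  intros [Hmp Hpn]; induction Hpn as [|n Hpn IH].
  - rewrite (rsum_empty f p p) by lia; ring.
  - rewrite !rsum_last by lia. rewrite IH; ring.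
Qed.

Lemma rsum_shift f p a b : rsum f (p + a) (p + b) = rsum (fun i => f (p + i)%nat) a b.
Proof.
  unfold rsum. replace (p + b - (p + a))%nat with (b - a)%nat by lia.
  generalize (b - a)%nat as k; intros k; revert a.
  induction k as [|k IH]; intros a; simpl; [reflexivity|].
  f_equal. rewrite <- IH. f_equal. lia.
Qed.

Lemma rsum_plus f g m n : rsum (fun i => f i + g i) m n = rsum f m n + rsum g m n.
Proof.
  unfold rsum; generalize (n - m)%nat as k; intros k; revert m.
  induction k as [|k IH]; intros m; simpl; [ring|]. rewrite IH; ring.
Qed.

Lemma rsum_scal c f m n : rsum (fun i => c * f i) m n = c * rsum f m n.
Proof.
  unfold rsum; generalize (n - m)%nat as k; intros k; revert m.
  induction k as [|k IH]; intros m; simpl; [ring|]. rewrite IH; ring.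
Qed.

Lemma rsum_zero m n : rsum (fun _ => 0) m n = 0.
Proof.
  unfold rsum; generalize (n - m)%nat as k; intros k; revert m.
  induction k as [|k IH]; intros m; simpl; [ring|]. rewrite IH; ring.
Qed.

Lemma rsum_sub f g m n : rsum f m n - rsum g m n = rsum (fun i => f i - g i) m n.
Proof.
  unfold Rminus. rewrite rsum_plus, <- (Rmult_1_l (rsum g m n)), Ropp_mult_distr_l, <- rsum_scal.
  f_equal. apply rsum_ext; intros; ring.
Qed.

Lemma rsum_telescope f m n : (m <= n)%nat -> rsum (fun i => f (S i) - f i) m n = f n - f m.
Proof.
  intros H; induction H as [|n H IH].
  - rewrite rsum_empty by lia; ring.
  - rewrite rsum_last, IH by lia. ring.
Qed.

Lemma rsum_le f g m n : (forall i, (m <= i < n)%nat -> f i <= g i) -> rsum f m n <= rsum g m n.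
Proof.
  induction n as [|n IH]; intros H.
  - rewrite !rsum_empty by lia; lra.
  - destruct (Nat.le_gt_cases m n).
    + rewrite !rsum_last by lia.
      assert (f n <= g n) by (apply H; lia).
      assert (rsum f m n <= rsum g m n) by (apply IH; intros; apply H; lia). lra.
    + rewrite !rsum_empty by lia; lra.
Qed.

Lemma rsum_nonneg f m n : (forall i, (m <= i < n)%nat -> 0 <= f i) -> 0 <= rsum f m n.
Proof. intros H. rewrite <- (rsum_zero m n). now apply rsum_le. Qed.

Lemma rsum_abs f m n : Rabs (rsum f m n) <= rsum (fun i => Rabs (f i)) m n.
Proof.
  unfold rsum; generalize (n - m)%nat as k; intros k; revert m.
  induction k as [|k IH]; intros m; simpl.
  - rewrite Rabs_R0; lra.
  - eapply Rle_trans; [apply Rabs_triang|]. specialize (IH (S m)). lra.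
Qed.

Lemma rsum_mono_range f m n p : (n <= p)%nat -> (forall i, (m <= i < p)%nat -> 0 <= f i) ->
  rsum f m n <= rsum f m p.
Proof.
  intros Hnp Hf. destruct (Nat.le_gt_cases m n).
  - rewrite (rsum_split f m n p) by lia.
    assert (0 <= rsum f n p) by (apply rsum_nonneg; intros; apply Hf; lia). lra.
  - rewrite (rsum_empty f m n) by lia. apply rsum_nonneg; auto.
Qed.

(** Convexity on the whole real line; the approximating functions are built
    from affine functions and hinges [s |-> max 0 (s - c)] with nonnegative
    coefficients, so they are convex on R. *)
Definition convex_R (f : R -> R) : Prop := forall x y lam, 0 <= lam <= 1 ->
  f (lam * x + (1 - lam) * y) <= lam * f x + (1 - lam) * f y.

Lemma convex_R_affine a b : convex_R (fun s => a + b * s).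
Proof. intros x y lam _. apply Req_le; ring. Qed.

Lemma convex_R_hinge c : convex_R (fun s => Rmax 0 (s - c)).
Proof.
  intros x y lam Hl. apply Rmax_lub.
  - assert (0 <= lam * Rmax 0 (x - c)) by (apply Rmult_le_pos; [lra | apply Rmax_l]).
    assert (0 <= (1 - lam) * Rmax 0 (y - c)) by (apply Rmult_le_pos; [lra | apply Rmax_l]).
    lra.
  - assert (lam * (x - c) <= lam * Rmax 0 (x - c)) by (apply Rmult_le_compat_l; [lra | apply Rmax_r]).
    assert ((1 - lam) * (y - c) <= (1 - lam) * Rmax 0 (y - c))
      by (apply Rmult_le_compat_l; [lra | apply Rmax_r]).
    nra.
Qed.

Lemma convex_R_scal c f : 0 <= c -> convex_R f -> convex_R (fun s => c * f s).
Proof.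
  intros Hc Hf x y lam Hl. specialize (Hf x y lam Hl).
  apply Rmult_le_compat_l with (r := c) in Hf; auto. lra.
Qed.

Lemma convex_R_plus f g : convex_R f -> convex_R g -> convex_R (fun s => f s + g s).
Proof. intros Hf Hg x y lam Hl. specialize (Hf x y lam Hl). specialize (Hg x y lam Hl). lra. Qed.

Lemma convex_R_rsum F m n : (forall k, convex_R (F k)) -> convex_R (fun s => rsum (fun k => F k s) m n).
Proof.
  intros HF. induction n as [|n IH]; intros x y lam Hl.
  - rewrite !rsum_empty by lia. lra.
  - destruct (Nat.le_gt_cases m n).
    + rewrite !rsum_last by lia.
      specialize (IH x y lam Hl). specialize (HF n x y lam Hl). simpl in *. lra.
    + rewrite !rsum_empty by lia. lra.
Qed.

Lemma hinge_lipschitz c x y : Rabs (Rmax 0 (x - c) - Rmax 0 (y - c)) <= Rabs (x - y).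
Proof. unfold Rmax; repeat destruct Rle_dec; unfold Rabs; repeat destruct Rcase_abs; lra. Qed.

Lemma hinge_sum_lipschitz (c t : nat -> R) m n x y :
  Rabs (rsum (fun k => c k * Rmax 0 (x - t k)) m n - rsum (fun k => c k * Rmax 0 (y - t k)) m n)
  <= rsum (fun k => Rabs (c k)) m n * Rabs (x - y).
Proof.
  rewrite rsum_sub. eapply Rle_trans; [apply rsum_abs|].
  rewrite Rmult_comm, <- rsum_scal. apply rsum_le. intros i _.
  rewrite <- Rmult_minus_distr_l, Rabs_mult, Rmult_comm.
  apply Rmult_le_compat_r; [apply Rabs_pos | apply hinge_lipschitz].
Qed.

Section Grid.
Variables (L : R) (n : nat).
Hypotheses (HL : 0 < L) (Hn : (1 <= n)%nat).

Definition mesh : R := L / INR n.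
Definition node (k : nat) : R := INR k * mesh.

Lemma mesh_pos : 0 < mesh.
Proof. unfold mesh. apply Rdiv_lt_0_compat; auto. apply lt_0_INR; lia. Qed.

Lemma node_0 : node 0 = 0.
Proof. unfold node; simpl; ring. Qed.

Lemma node_S k : node (S k) = node k + mesh.
Proof. unfold node; rewrite S_INR; ring. Qed.

Lemma node_n : node n = L.
Proof. unfold node, mesh. field. apply not_0_INR; lia. Qed.

Lemma node_le k k' : (k <= k')%nat -> node k <= node k'.
Proof.
  intros Hk. unfold node. apply Rmult_le_compat_r; [left; apply mesh_pos | apply le_INR; auto].
Qed.

Lemma node_nonneg k : 0 <= node k.
Proof. rewrite <- node_0 at 1. apply node_le; lia. Qed.

Lemma cell_in_range k : (k < n)%nat -> 0 <= node k /\ node (S k) <= L.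
Proof.
  intros Hk. split; [apply node_nonneg | rewrite <- node_n; apply node_le; lia].
Qed.

Lemma node_partition : partition 0 L node n.
Proof.
  split; [auto | split; [apply node_0 | split; [apply node_n |]]].
  intros i _. rewrite node_S. assert (H := mesh_pos). lra.
Qed.

Lemma locate_cell s : 0 <= s <= L -> exists j, (j < n)%nat /\ node j <= s <= node (S j).
Proof.
  intros Hs. rewrite <- node_n in Hs.
  assert (Gen : forall m, (1 <= m)%nat -> s <= node m -> exists j, (j < m)%nat /\ node j <= s <= node (S j)).
  { induction m as [|m IH]; intros Hm Hsm; [lia|].
    destruct (Rle_dec (node m) s).
    - exists m; split; [lia | lra].
    - destruct m as [|m]; [rewrite node_0 in *; lra|].
      destruct IH as [j [Hj1 Hj2]]; [lia | lra |]. exists j; split; [lia | lra]. }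
  apply Gen; [lia | lra].
Qed.

End Grid.

(** The piecewise linear interpolation of [h] on the grid, written with hinges
    at the interior nodes: its coefficients are the jumps of the slopes.
    Splitting the jumps into positive and negative parts writes it as the
    difference of two convex functions [interp_plus - interp_minus]. *)
Section Interpolation.
Variables (h : R -> R) (L : R) (n : nat).
Hypotheses (HL : 0 < L) (Hn : (1 <= n)%nat).

Definition slope (k : nat) : R := (h (node L n (S k)) - h (node L n k)) / mesh L n.
Definition jump (k : nat) : R := slope k - slope (pred k).

Definition interp (s : R) : R :=
  h 0 + slope 0 * s + rsum (fun k => jump k * Rmax 0 (s - node L n k)) 1 n.
Definition interp_plus (s : R) : R :=
  h 0 + slope 0 * s + rsum (fun k => Rmax 0 (jump k) * Rmax 0 (s - node L n k)) 1 n.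
Definition interp_minus (s : R) : R :=
  rsum (fun k => Rmax 0 (- jump k) * Rmax 0 (s - node L n k)) 1 n.

Lemma interp_plus_minus s : interp_plus s - interp_minus s = interp s.
Proof.
  unfold interp_plus, interp_minus, interp.
  assert (E : forall d, Rmax 0 d - Rmax 0 (- d) = d) by (intros d; unfold Rmax; repeat destruct Rle_dec; lra).
  enough (rsum (fun k => Rmax 0 (jump k) * Rmax 0 (s - node L n k)) 1 n
    - rsum (fun k => Rmax 0 (- jump k) * Rmax 0 (s - node L n k)) 1 n
    = rsum (fun k => jump k * Rmax 0 (s - node L n k)) 1 n) by lra.
  rewrite rsum_sub. apply rsum_ext. intros i _. rewrite <- Rmult_minus_distr_r, E. reflexivity.
Qed.

Lemma interp_plus_convex : convex_R interp_plus.
Proof.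
  apply convex_R_plus; [apply convex_R_affine|].
  apply (convex_R_rsum (fun k s => Rmax 0 (jump k) * Rmax 0 (s - node L n k))).
  intros k. apply convex_R_scal; [apply Rmax_l | apply convex_R_hinge].
Qed.

Lemma interp_minus_convex : convex_R interp_minus.
Proof.
  apply (convex_R_rsum (fun k s => Rmax 0 (- jump k) * Rmax 0 (s - node L n k))).
  intros k. apply convex_R_scal; [apply Rmax_l | apply convex_R_hinge].
Qed.

Lemma hinges_at_0 (c : nat -> R) : rsum (fun k => c k * Rmax 0 (0 - node L n k)) 1 n = 0.
Proof.
  transitivity (rsum (fun _ => 0) 1 n); [| apply rsum_zero]. apply rsum_ext. intros i _.
  assert (0 <= node L n i) by (apply node_nonneg; auto).
  replace (Rmax 0 (0 - node L n i)) with 0 by (unfold Rmax; destruct Rle_dec; lra). ring.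
Qed.

Lemma interp_plus_0 : interp_plus 0 = h 0.
Proof. unfold interp_plus. rewrite hinges_at_0. ring. Qed.

Lemma interp_minus_0 : interp_minus 0 = 0.
Proof. apply hinges_at_0. Qed.

Lemma interp_on_cell j s : (j < n)%nat -> node L n j <= s <= node L n (S j) ->
  interp s = h (node L n j) + slope j * (s - node L n j).
Proof.
  intros Hj Hs. assert (Hd := mesh_pos L n HL Hn).
  unfold interp. rewrite (rsum_split _ 1 (S j) n) by lia.
  rewrite (rsum_ext _ (fun _ => 0) (S j) n), rsum_zero, Rplus_0_r.
  2:{ intros i Hi. assert (node L n (S j) <= node L n i) by (apply node_le; auto; lia).
      replace (Rmax 0 (s - node L n i)) with 0 by (unfold Rmax; destruct Rle_dec; lra). ring. }
  rewrite (rsum_ext _ (fun k => jump k * (s - node L n k)) 1 (S j)).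
  2:{ intros i Hi. assert (node L n i <= node L n j) by (apply node_le; auto; lia).
      replace (Rmax 0 (s - node L n i)) with (s - node L n i) by (unfold Rmax; destruct Rle_dec; lra).
      reflexivity. }
  clear Hj Hs. induction j as [|j IH].
  - rewrite rsum_empty by lia. rewrite node_0. ring.
  - rewrite rsum_last by lia. rewrite <- Rplus_assoc, IH. unfold jump, slope. simpl pred.
    rewrite (node_S L n (S j)), (node_S L n j). field. lra.
Qed.

Section Lipschitz.
Hypothesis h_lip : forall x y, 0 <= x <= L -> 0 <= y <= L -> Rabs (h x - h y) <= Rabs (x - y).

Lemma slope_bound k : (k < n)%nat -> Rabs (slope k) <= 1.
Proof.
  intros Hk. assert (Hd := mesh_pos L n HL Hn).
  destruct (cell_in_range L n HL Hn k Hk) as [H0 H1]. assert (HS := node_S L n k).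
  unfold slope, Rdiv. rewrite Rabs_mult, Rabs_inv, (Rabs_right (mesh L n)) by lra.
  apply (Rmult_le_reg_r (mesh L n)); auto. rewrite Rmult_assoc, Rinv_l, Rmult_1_r, Rmult_1_l by lra.
  eapply Rle_trans; [apply h_lip; lra|]. rewrite Rabs_right; lra.
Qed.

Lemma interp_error s : 0 <= s <= L -> Rabs (interp s - h s) <= 2 * mesh L n.
Proof.
  intros Hs. assert (Hd := mesh_pos L n HL Hn).
  destruct (locate_cell L n Hn s Hs) as [j [Hj Hjs]].
  destruct (cell_in_range L n HL Hn j Hj) as [H0 H1]. assert (HS := node_S L n j).
  rewrite (interp_on_cell j s Hj Hjs).
  assert (E1 : Rabs (h (node L n j) - h s) <= mesh L n).
  { eapply Rle_trans; [apply h_lip; lra|]. rewrite Rabs_left1; lra. }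
  assert (E2 : Rabs (slope j * (s - node L n j)) <= mesh L n).
  { rewrite Rabs_mult, (Rabs_right (s - _)) by lra.
    assert (Hsl := slope_bound j Hj). nra. }
  replace (h (node L n j) + slope j * (s - node L n j) - h s)
    with ((h (node L n j) - h s) + slope j * (s - node L n j)) by ring.
  eapply Rle_trans; [apply Rabs_triang | lra].
Qed.

Variable C : R.
Hypothesis jumps_le : rsum (fun k => Rabs (jump k)) 1 n <= C.

Lemma pos_part_abs d : Rabs (Rmax 0 d) <= Rabs d.
Proof. unfold Rmax; destruct Rle_dec; unfold Rabs; repeat destruct Rcase_abs; lra. Qed.

Lemma interp_plus_lipschitz x y : Rabs (interp_plus x - interp_plus y) <= (1 + C) * Rabs (x - y).
Proof.
  unfold interp_plus.
  assert (H1 := hinge_sum_lipschitz (fun k => Rmax 0 (jump k)) (node L n) 1 n x y).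
  assert (H2 : rsum (fun k => Rabs (Rmax 0 (jump k))) 1 n <= C).
  { eapply Rle_trans; [| apply jumps_le]. apply rsum_le. intros; apply pos_part_abs. }
  assert (H3 : Rabs (slope 0 * x - slope 0 * y) <= Rabs (x - y)).
  { rewrite <- Rmult_minus_distr_l, Rabs_mult.
    assert (Hs := slope_bound 0 ltac:(lia)). assert (Hp := Rabs_pos (x - y)). nra. }
  assert (Hp := Rabs_pos (x - y)).
  assert (H4 : rsum (fun k => Rabs (Rmax 0 (jump k))) 1 n * Rabs (x - y) <= C * Rabs (x - y))
    by (apply Rmult_le_compat_r; lra).
  match goal with |- Rabs (?a + ?b + ?c - (?a + ?d + ?e)) <= _ =>
    replace (a + b + c - (a + d + e)) with ((b - d) + (c - e)) by ring end.
  eapply Rle_trans; [apply Rabs_triang | simpl in H1; lra].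
Qed.

Lemma interp_minus_lipschitz x y : Rabs (interp_minus x - interp_minus y) <= C * Rabs (x - y).
Proof.
  unfold interp_minus.
  eapply Rle_trans; [apply (hinge_sum_lipschitz (fun k => Rmax 0 (- jump k)) (node L n))|].
  apply Rmult_le_compat_r; [apply Rabs_pos|]. eapply Rle_trans; [| apply jumps_le].
  apply rsum_le. intros. eapply Rle_trans; [apply pos_part_abs|]. rewrite Rabs_Ropp; lra.
Qed.

End Lipschitz.
End Interpolation.

Definition limsup (u : nat -> R) : R := Rbar.real (Lim_seq.LimSup_seq u).

Lemma le_epsilon_bound x y : (forall eps, 0 < eps -> x <= y + eps) -> x <= y.
Proof. intros H. destruct (Rle_dec x y) as [|Hn]; auto. specialize (H ((x - y) / 2) ltac:(lra)). lra. Qed.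

Lemma Rabs_le_between x b : Rabs x <= b -> - b <= x <= b.
Proof. unfold Rabs; destruct Rcase_abs; lra. Qed.

Section LimSup.
Variables (u : nat -> R) (B : R).
Hypothesis u_bounded : forall n, Rabs (u n) <= B.

Lemma limsup_spec :
  (forall eps, 0 < eps -> exists N, forall n, (N <= n)%nat -> u n < limsup u + eps) /\
  (forall eps, 0 < eps -> forall N, exists n, (N <= n)%nat /\ limsup u - eps < u n).
Proof.
  unfold limsup, Lim_seq.LimSup_seq.
  destruct (Lim_seq.ex_LimSup_seq u) as [l Hl]; simpl.
  destruct l as [l | |]; simpl in Hl |- *.
  - split.
    + intros eps He. exact (proj2 (Hl (mkposreal eps He))).
    + intros eps He N. exact (proj1 (Hl (mkposreal eps He)) N).
  - exfalso. destruct (Hl B 0%nat) as [n [_ Hn]].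
    assert (Hb := Rabs_le_between _ _ (u_bounded n)). lra.
  - exfalso. destruct (Hl (- B)) as [N HN]. specialize (HN N (le_n N)).
    assert (Hb := Rabs_le_between _ _ (u_bounded N)). lra.
Qed.

Lemma limsup_le c : (exists N, forall n, (N <= n)%nat -> u n <= c) -> limsup u <= c.
Proof.
  intros [N HN]. destruct limsup_spec as [_ H2].
  destruct (Rle_dec (limsup u) c) as [|Hn]; auto.
  destruct (H2 (limsup u - c) ltac:(lra) N) as [n [Hn1 Hn2]]. specialize (HN n Hn1). lra.
Qed.

Lemma limsup_ge c : (forall N, exists n, (N <= n)%nat /\ c <= u n) -> c <= limsup u.
Proof.
  intros HN. destruct limsup_spec as [H1 _].
  destruct (Rle_dec c (limsup u)) as [|Hn]; auto.
  destruct (H1 (c - limsup u) ltac:(lra)) as [N HN']. destruct (HN N) as [n [Hn1 Hn2]].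
  specialize (HN' n Hn1). lra.
Qed.

End LimSup.

Lemma limsup_shift u v B c : (forall n, Rabs (u n) <= B) -> (forall n, Rabs (v n) <= B) ->
  (forall eps, 0 < eps -> exists N, forall n, (N <= n)%nat -> Rabs (u n - v n - c) <= eps) ->
  limsup u = limsup v + c.
Proof.
  intros Hu Hv Hcv. apply Rle_antisym; apply le_epsilon_bound; intros eps He.
  - destruct (Hcv (eps / 2) ltac:(lra)) as [N1 HN1].
    destruct (limsup_spec v B Hv) as [H1 _]. destruct (H1 (eps / 2) ltac:(lra)) as [N2 HN2].
    apply (limsup_le u B Hu). exists (N1 + N2)%nat. intros n Hn.
    specialize (HN1 n ltac:(lia)). specialize (HN2 n ltac:(lia)).
    apply Rabs_le_between in HN1. lra.
  - destruct (Hcv (eps / 2) ltac:(lra)) as [N1 HN1].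
    destruct (limsup_spec v B Hv) as [_ H2].
    enough (limsup v + c - eps <= limsup u) by lra.
    apply (limsup_ge u B Hu). intros N.
    destruct (H2 (eps / 2) ltac:(lra) (N1 + N)%nat) as [n [Hn1 Hn2]]. exists n. split; [lia|].
    specialize (HN1 n ltac:(lia)). apply Rabs_le_between in HN1. lra.
Qed.

Section LimSupFunction.
Variables (f : nat -> R -> R) (L B : R).
Hypothesis f_bounded : forall n s, 0 <= s <= L -> Rabs (f n s) <= B.

Definition limsup_fun (s : R) : R := limsup (fun n => f n s).

Lemma limsup_fun_lipschitz K : (forall n x y, Rabs (f n x - f n y) <= K * Rabs (x - y)) ->
  forall x y, 0 <= x <= L -> 0 <= y <= L -> Rabs (limsup_fun x - limsup_fun y) <= K * Rabs (x - y).
Proof.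
  intros HK.
  assert (Half : forall x y, 0 <= x <= L -> 0 <= y <= L ->
            limsup_fun x <= limsup_fun y + K * Rabs (x - y)).
  { intros x y Hx Hy. unfold limsup_fun. apply le_epsilon_bound. intros eps He.
    destruct (limsup_spec (fun n => f n y) B (fun n => f_bounded n y Hy)) as [H1 _].
    destruct (H1 eps He) as [N HN].
    enough (limsup (fun n => f n x) <= limsup (fun n => f n y) + eps + K * Rabs (x - y)) by lra.
    apply (limsup_le _ B (fun n => f_bounded n x Hx)). exists N. intros n Hn.
    specialize (HN n Hn). specialize (HK n x y). apply Rabs_le_between in HK. lra. }
  intros x y Hx Hy. assert (A1 := Half x y Hx Hy). assert (A2 := Half y x Hy Hx).
  rewrite Rabs_minus_sym in A2. apply Rabs_le. lra.
Qed.

Lemma limsup_fun_convex : (forall n, convex_R (f n)) -> convex_on 0 L limsup_fun.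
Proof.
  intros Hc x y lam Hx Hy Hl. unfold limsup_fun.
  assert (Hm : 0 <= lam * x + (1 - lam) * y <= L) by nra.
  apply le_epsilon_bound. intros eps He.
  destruct (limsup_spec (fun n => f n x) B (fun n => f_bounded n x Hx)) as [H1 _].
  destruct (limsup_spec (fun n => f n y) B (fun n => f_bounded n y Hy)) as [H2 _].
  destruct (H1 eps He) as [N1 HN1]. destruct (H2 eps He) as [N2 HN2].
  apply (limsup_le _ B (fun n => f_bounded n _ Hm)).
  exists (N1 + N2)%nat. intros n Hn.
  specialize (HN1 n ltac:(lia)). specialize (HN2 n ltac:(lia)). specialize (Hc n x y lam Hl).
  nra.
Qed.

End LimSupFunction.

Lemma lipschitz_continuous a b f K : 0 <= K ->
  (forall x y, a <= x <= b -> a <= y <= b -> Rabs (f x - f y) <= K * Rabs (x - y)) ->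
  continuous_on a b f.
Proof.
  intros HK Hf x Hx eps He. exists (eps / (K + 1)). split; [apply Rdiv_lt_0_compat; lra|].
  intros y Hy Hyx. eapply Rle_lt_trans; [apply Hf; auto|].
  assert (0 <= Rabs (y - x)) by apply Rabs_pos.
  apply Rle_lt_trans with ((K + 1) * Rabs (y - x)); [nra|].
  replace eps with ((K + 1) * (eps / (K + 1))) by (field; lra).
  apply Rmult_lt_compat_l; lra.
Qed.

Lemma bounded_of_lipschitz f L B0 K : 0 <= K -> Rabs (f 0) <= B0 ->
  (forall x y, Rabs (f x - f y) <= K * Rabs (x - y)) ->
  forall s, 0 <= s <= L -> Rabs (f s) <= B0 + K * L.
Proof.
  intros HK H0 Hf s Hs. specialize (Hf s 0). rewrite Rminus_0_r, (Rabs_right s) in Hf by lra.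
  assert (Rabs (f s) <= Rabs (f 0) + Rabs (f s - f 0)).
  { replace (f s) with (f 0 + (f s - f 0)) at 1 by ring. apply Rabs_triang. }
  nra.
Qed.

Lemma delta_convex_of_approximations (G F : nat -> R -> R) (h : R -> R) L B K :
  0 <= K ->
  (forall n s, 0 <= s <= L -> Rabs (G n s) <= B) ->
  (forall n s, 0 <= s <= L -> Rabs (F n s) <= B) ->
  (forall n x y, Rabs (G n x - G n y) <= K * Rabs (x - y)) ->
  (forall n x y, Rabs (F n x - F n y) <= K * Rabs (x - y)) ->
  (forall n, convex_R (G n)) -> (forall n, convex_R (F n)) ->
  (forall s, 0 <= s <= L -> forall eps, 0 < eps ->
     exists N, forall n, (N <= n)%nat -> Rabs (G n s - F n s - h s) <= eps) ->
  delta_convex_on 0 L h.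
Proof.
  intros HK BG BF LG LF CG CF Hcv.
  exists (limsup_fun G), (limsup_fun F).
  split; [| split; [| split; [| split]]].
  - apply (lipschitz_continuous _ _ _ K HK). apply (limsup_fun_lipschitz G L B BG K LG).
  - apply (limsup_fun_convex G L B BG CG).
  - apply (lipschitz_continuous _ _ _ K HK). apply (limsup_fun_lipschitz F L B BF K LF).
  - apply (limsup_fun_convex F L B BF CF).
  - intros s Hs. unfold limsup_fun.
    rewrite (limsup_shift (fun n => G n s) (fun n => F n s) B (h s)); [ring | | | apply Hcv; auto];
      intros n; auto.
Qed.

Lemma mesh_vanishes L eps : 0 < eps -> exists N, forall n, (N <= n)%nat -> mesh L (S n) < eps.
Proof.
  intros He. destruct (INR_unbounded (Rabs L / eps)) as [N HN].
  exists N. intros n Hn. unfold mesh.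
  assert (INR N <= INR n) by (apply le_INR; auto).
  assert (HS : 0 < INR (S n)) by (apply lt_0_INR; lia). rewrite S_INR in *.
  assert (L <= Rabs L) by apply Rle_abs.
  apply (Rmult_lt_reg_r (INR n + 1)); [lra|].
  unfold Rdiv. rewrite Rmult_assoc, Rinv_l by lra.
  assert (Rabs L < eps * INR N).
  { replace (Rabs L) with ((Rabs L / eps) * eps) by (field; lra). nra. }
  nra.
Qed.

(** A 1-Lipschitz function on [0, L] whose grid slopes have uniformly bounded
    variation is DC: apply the criterion to the convex parts of its grid
    interpolations. *)
Lemma delta_convex_of_bounded_jumps h L C : 0 < L ->
  (forall x y, 0 <= x <= L -> 0 <= y <= L -> Rabs (h x - h y) <= Rabs (x - y)) ->
  (forall n, (1 <= n)%nat -> rsum (fun k => Rabs (jump h L n k)) 1 n <= C) ->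
  delta_convex_on 0 L h.
Proof.
  intros HL Hlip HC.
  assert (HC0 : 0 <= C) by (specialize (HC 1%nat (le_n 1)); rewrite rsum_empty in HC by lia; lra).
  assert (Hn : forall n, (1 <= S n)%nat) by (intros; lia).
  set (G := fun n => interp_plus h L (S n)). set (F := fun n => interp_minus h L (S n)).
  assert (LG : forall n x y, Rabs (G n x - G n y) <= (1 + C) * Rabs (x - y))
    by (intros n x y; apply interp_plus_lipschitz; auto).
  assert (LF : forall n x y, Rabs (F n x - F n y) <= (1 + C) * Rabs (x - y)).
  { intros n x y. eapply Rle_trans; [apply interp_minus_lipschitz; auto|].
    assert (Hp := Rabs_pos (x - y)). nra. }
  apply (delta_convex_of_approximations G F h L (Rabs (h 0) + (1 + C) * L) (1 + C)); auto; try lra.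
  - intros n. apply bounded_of_lipschitz; auto; [lra |].
    unfold G. rewrite interp_plus_0 by auto. lra.
  - intros n. apply bounded_of_lipschitz; auto; [lra |].
    unfold F. rewrite interp_minus_0, Rabs_R0 by auto. apply Rabs_pos.
  - intros n; apply interp_plus_convex.
  - intros n; apply interp_minus_convex.
  - intros s Hs eps He. destruct (mesh_vanishes L (eps / 2) ltac:(lra)) as [N HN].
    exists N. intros n Hn'. unfold G, F. rewrite interp_plus_minus.
    eapply Rle_trans; [apply interp_error; auto|]. specialize (HN n Hn'). lra.
Qed.

Lemma dot_nonneg u : 0 <= dot u u.
Proof. unfold dot. nra. Qed.

Lemma pnorm_nonneg u : 0 <= pnorm u.
Proof. apply sqrt_pos. Qed.

Lemma pnorm_sq u : pnorm u * pnorm u = dot u u.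
Proof. apply sqrt_sqrt, dot_nonneg. Qed.

Lemma pnorm_le_of_sq u c : 0 <= c -> dot u u <= c * c -> pnorm u <= c.
Proof. intros Hc H. unfold pnorm. rewrite <- (sqrt_square c Hc). apply sqrt_le_1_alt. auto. Qed.

(** Cauchy-Schwarz, from Lagrange's identity
    [(ac+bd)^2 + (ad-bc)^2 = (a^2+b^2)(c^2+d^2)]. *)
Lemma cauchy_schwarz u v : Rabs (dot u v) <= pnorm u * pnorm v.
Proof.
  unfold pnorm. rewrite <- sqrt_mult by apply dot_nonneg. rewrite <- sqrt_Rsqr_abs.
  apply sqrt_le_1_alt. destruct u as [a b], v as [c d]. unfold Rsqr, dot; simpl.
  assert (0 <= (a * d - b * c) * (a * d - b * c)) by apply Rle_0_sqr. nra.
Qed.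

Lemma dot_le u v : dot u v <= pnorm u * pnorm v.
Proof. eapply Rle_trans; [apply Rle_abs | apply cauchy_schwarz]. Qed.

Lemma pdist_self p : pdist p p = 0.
Proof.
  unfold pdist, pnorm, dot, psub; simpl. rewrite !Rminus_diag.
  replace (0 * 0 + 0 * 0) with 0 by ring. apply sqrt_0.
Qed.

Lemma pdist_triangle p q r : pdist p r <= pdist p q + pdist q r.
Proof.
  unfold pdist. assert (H1 := pnorm_nonneg (psub p q)). assert (H2 := pnorm_nonneg (psub q r)).
  apply pnorm_le_of_sq; [lra|].
  assert (E : dot (psub p r) (psub p r) =
    dot (psub p q) (psub p q) + dot (psub q r) (psub q r) + 2 * dot (psub p q) (psub q r))
    by (unfold dot, psub; simpl; ring).
  rewrite E, <- !pnorm_sq. assert (H := dot_le (psub p q) (psub q r)). nra.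
Qed.

Lemma pnorm_psub_pos p q : p <> q -> 0 < pnorm (psub p q).
Proof.
  intros Hne. destruct (Rle_lt_or_eq_dec _ _ (pnorm_nonneg (psub p q))) as [| E]; auto.
  exfalso. apply Hne. symmetry in E. apply sqrt_eq_0 in E; [| apply dot_nonneg].
  destruct p as [p1 p2], q as [q1 q2]. unfold dot, psub in E; simpl in E.
  assert (A1 := Rle_0_sqr (p1 - q1)). assert (A2 := Rle_0_sqr (p2 - q2)). unfold Rsqr in *.
  assert (B1 : (p1 - q1) * (p1 - q1) = 0) by lra. assert (B2 : (p2 - q2) * (p2 - q2) = 0) by lra.
  apply Rmult_integral in B1, B2. f_equal; lra.
Qed.

Definition unitv (d : pt) : pt := (fst d / pnorm d, snd d / pnorm d).

Lemma unitv_dot d : 0 < pnorm d -> dot (unitv d) (unitv d) = 1.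
Proof.
  intros H. assert (H1 := pnorm_sq d). unfold unitv, dot in *; simpl.
  replace (fst d / pnorm d * (fst d / pnorm d) + snd d / pnorm d * (snd d / pnorm d))
    with ((fst d * fst d + snd d * snd d) / (pnorm d * pnorm d)) by (field; lra).
  rewrite <- H1. field. lra.
Qed.

Lemma unit_pnorm u : dot u u = 1 -> pnorm u = 1.
Proof. intros H. unfold pnorm. rewrite H. apply sqrt_1. Qed.

Lemma unit_dot_ge x y : dot x x = 1 -> dot y y = 1 -> 1 - pdist x y <= dot x y.
Proof.
  intros Hx Hy. unfold pdist.
  assert (H1 := pnorm_sq (psub x y)). assert (H2 := pnorm_nonneg (psub x y)).
  assert (E : dot (psub x y) (psub x y) = dot x x + dot y y - 2 * dot x y)
    by (unfold dot, psub; simpl; ring).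
  assert (H3 := cauchy_schwarz x y). rewrite !unit_pnorm in H3 by auto.
  apply Rabs_le_between in H3. nra.
Qed.

Lemma angle_nonneg u v : 0 <= angle u v.
Proof. apply acos_bound. Qed.

(** The angle between two directions bounds the distance of the
    corresponding unit vectors: [|e_b - e_a| = 2 sin (alpha / 2) <= alpha]. *)
Lemma unitv_dist_le_angle u v : 0 < pnorm u -> 0 < pnorm v -> pdist (unitv v) (unitv u) <= angle u v.
Proof.
  intros Hu Hv. unfold angle.
  assert (Uu := unitv_dot u Hu). assert (Uv := unitv_dot v Hv).
  set (c := dot u v / (pnorm u * pnorm v)).
  assert (Ec : c = dot (unitv u) (unitv v)) by (unfold c, unitv, dot; simpl; field; lra).
  assert (Hc : -1 <= c <= 1).
  { rewrite Ec. apply Rabs_le_between.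
    assert (H := cauchy_schwarz (unitv u) (unitv v)). rewrite !unit_pnorm in H by auto. lra. }
  assert (Hal := acos_bound c). set (al := acos c) in *.
  assert (Hcos : cos al = c) by (apply cos_acos; auto).
  assert (Hs : cos al = 1 - 2 * sin (al / 2) * sin (al / 2)).
  { rewrite <- cos_2a_sin. f_equal. field. }
  assert (Hsin0 : 0 <= sin (al / 2)) by (apply sin_ge_0; lra).
  assert (Hsin1 : sin (al / 2) <= al / 2).
  { destruct (Req_dec al 0) as [E | E].
    - rewrite E. replace (0 / 2) with 0 by field. rewrite sin_0; lra.
    - left. apply sin_lt_x. lra. }
  apply pnorm_le_of_sq; [lra|].
  assert (E : dot (psub (unitv v) (unitv u)) (psub (unitv v) (unitv u))
    = dot (unitv v) (unitv v) + dot (unitv u) (unitv u) - 2 * dot (unitv u) (unitv v))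
    by (unfold dot, psub; simpl; ring).
  rewrite E, Uu, Uv, <- Ec, <- Hcos, Hs. nra.
Qed.

Lemma partition_mono c d u m i j : partition c d u m -> (i <= j <= m)%nat -> u i <= u j.
Proof.
  intros [_ [_ [_ Hinc]]] [Hij Hjm]. induction Hij as [| j Hij IH]; [lra|].
  assert (u j < u (S j)) by (apply Hinc; lia). assert (u i <= u j) by (apply IH; lia). lra.
Qed.

Lemma partition_range c d u m i : partition c d u m -> (i <= m)%nat -> c <= u i <= d.
Proof.
  intros Hp Hi. pose proof Hp as [_ [H0 [Hm _]]]. rewrite <- H0, <- Hm.
  split; apply (partition_mono c d u m); auto; lia.
Qed.

Lemma abs_rotation_nonneg z u m : 0 <= abs_rotation z u m.
Proof. apply rsum_nonneg. intros; apply angle_nonneg. Qed.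

(** The chord is an inscribed broken line, so it is not longer than the arc. *)
Definition chord_partition (x y : R) (i : nat) : R := match i with O => x | _ => y end.

Lemma chord_le_length z x y l : x < y -> is_length z x y l -> pdist (z y) (z x) <= l.
Proof.
  intros Hxy [Hub _]. apply Hub. exists (chord_partition x y), 1%nat. split.
  - split; [lia | split; [reflexivity | split; [reflexivity |]]].
    intros i Hi. replace i with 0%nat by lia. simpl. lra.
  - unfold polylen, rsum. simpl. ring.
Qed.

(** Concatenating partitions of [c, e] and [e, d]; the rotation of the
    concatenation is at least the sum of the rotations (the angle at the
    junction vertex [e] is added). *)
Definition glue (u1 u2 : nat -> R) (m1 : nat) (i : nat) : R :=
  if Nat.leb i m1 then u1 i else u2 (i - m1)%nat.

Lemma glue_partition c e d u1 m1 u2 m2 : partition c e u1 m1 -> partition e d u2 m2 ->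
  partition c d (glue u1 u2 m1) (m1 + m2).
Proof.
  intros [H1 [H2 [H3 H4]]] [K1 [K2 [K3 K4]]]. unfold glue. split; [lia | split; [| split]].
  - auto.
  - destruct (Nat.leb_spec (m1 + m2) m1); [lia|]. replace (m1 + m2 - m1)%nat with m2 by lia. auto.
  - intros i Hi. destruct (Nat.leb_spec i m1), (Nat.leb_spec (S i) m1); [apply H4; lia | | lia |].
    + replace i with m1 by lia. replace (S m1 - m1)%nat with 1%nat by lia.
      rewrite H3, <- K2. apply K4; lia.
    + replace (S i - m1)%nat with (S (i - m1)) by lia. apply K4; lia.
Qed.

Lemma glue_rotation z c e d u1 m1 u2 m2 : partition c e u1 m1 -> partition e d u2 m2 ->
  abs_rotation z u1 m1 + abs_rotation z u2 m2 <= abs_rotation z (glue u1 u2 m1) (m1 + m2).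
Proof.
  intros P1 P2. pose proof P1 as [H1 [H2 [H3 H4]]]. pose proof P2 as [K1 [K2 [K3 K4]]].
  set (w := glue u1 u2 m1).
  set (turn := fun i => angle (psub (z (w i)) (z (w (pred i)))) (psub (z (w (S i))) (z (w i)))).
  assert (E1 : abs_rotation z u1 m1 = rsum turn 1 m1).
  { apply rsum_ext. intros i Hi. unfold turn, w, glue.
    destruct (Nat.leb_spec i m1), (Nat.leb_spec (pred i) m1), (Nat.leb_spec (S i) m1); try lia.
    reflexivity. }
  assert (E2 : abs_rotation z u2 m2 = rsum turn (S m1) (m1 + m2)).
  { replace (S m1) with (m1 + 1)%nat by lia. rewrite rsum_shift. apply rsum_ext. intros i Hi.
    unfold turn, w, glue.
    destruct (Nat.leb_spec (m1 + i) m1), (Nat.leb_spec (S (m1 + i)) m1); try lia.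
    replace (m1 + i - m1)%nat with i by lia. replace (S (m1 + i) - m1)%nat with (S i) by lia.
    destruct (Nat.leb_spec (pred (m1 + i)) m1).
    - replace i with 1%nat by lia. replace (pred (m1 + 1)) with m1 by lia.
      rewrite H3, <- K2. reflexivity.
    - replace (pred (m1 + i) - m1)%nat with (pred i) by lia. reflexivity. }
  unfold abs_rotation at 3. fold w. fold turn.
  rewrite E1, E2, (rsum_split turn 1 m1 (m1 + m2)), (rsum_first turn m1 (m1 + m2)) by lia.
  assert (0 <= turn m1) by apply angle_nonneg. lra.
Qed.

(** The direction of every edge
    differs from the first one by at most the rotation, so projecting the
    edges on the first direction loses at most that fraction of the length. *)
Section ChordArc.
Variables (z : R -> pt) (p q : R) (u : nat -> R) (m : nat).
Hypothesis u_part : partition p q u m.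

Definition edge (i : nat) : pt := psub (z (u (S i))) (z (u i)).
Definition dir (i : nat) : pt := unitv (edge i).

Hypothesis edge_nonzero : forall i, (i < m)%nat -> 0 < pnorm (edge i).

Lemma abs_rotation_edges : abs_rotation z u m = rsum (fun k => angle (edge (pred k)) (edge k)) 1 m.
Proof. apply rsum_ext. intros k Hk. unfold edge. replace (S (pred k)) with k by lia. reflexivity. Qed.

Lemma direction_drift i : (i < m)%nat -> pdist (dir i) (dir 0) <= abs_rotation z u m.
Proof.
  intros Hi. rewrite abs_rotation_edges.
  eapply Rle_trans; [| apply (rsum_mono_range _ 1 (S i) m); [lia | intros; apply angle_nonneg]].
  induction i as [| i IH].
  - rewrite pdist_self, rsum_empty by lia. lra.
  - rewrite rsum_last by lia. simpl pred.
    eapply Rle_trans; [apply (pdist_triangle _ (dir i)) |].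
    assert (pdist (dir (S i)) (dir i) <= angle (edge i) (edge (S i)))
      by (apply unitv_dist_le_angle; apply edge_nonzero; lia).
    specialize (IH ltac:(lia)). lra.
Qed.

Lemma chord_projection :
  dot (psub (z q) (z p)) (dir 0) = rsum (fun i => pnorm (edge i) * dot (dir i) (dir 0)) 0 m.
Proof.
  pose proof u_part as [Hm [H0 [Hq _]]].
  assert (H00 := edge_nonzero 0 ltac:(lia)).
  rewrite (rsum_ext _ (fun i => fst (dir 0) * (fst (z (u (S i))) - fst (z (u i)))
                               + snd (dir 0) * (snd (z (u (S i))) - snd (z (u i))))).
  2:{ intros i Hi. assert (Hei := edge_nonzero i ltac:(lia)).
      unfold dir, unitv, dot, edge, psub in *; simpl in *. field. split; lra. }
  rewrite rsum_plus, !rsum_scal.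
  rewrite (rsum_telescope (fun i => fst (z (u i)))), (rsum_telescope (fun i => snd (z (u i)))) by lia.
  rewrite Hq, H0. unfold dot, psub; simpl. ring.
Qed.

Lemma chord_arc : (1 - abs_rotation z u m) * polylen z u m <= pnorm (psub (z q) (z p)).
Proof.
  pose proof u_part as [Hm _].
  assert (Hdir : forall i, (i < m)%nat -> dot (dir i) (dir i) = 1)
    by (intros i Hi; apply unitv_dot, edge_nonzero; auto).
  assert (Hproj : dot (psub (z q) (z p)) (dir 0) <= pnorm (psub (z q) (z p))).
  { eapply Rle_trans; [apply dot_le |]. rewrite (unit_pnorm (dir 0)) by (apply Hdir; lia). lra. }
  rewrite chord_projection in Hproj. eapply Rle_trans; [| exact Hproj].
  unfold polylen. rewrite <- rsum_scal. apply rsum_le. intros i Hi.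
  assert (Hd := direction_drift i ltac:(lia)).
  assert (Hge := unit_dot_ge (dir i) (dir 0) (Hdir i ltac:(lia)) (Hdir 0%nat ltac:(lia))).
  assert (Hn := pnorm_nonneg (edge i)). unfold pdist. fold (edge i).
  rewrite Rmult_comm. apply Rmult_le_compat_l; lra.
Qed.

End ChordArc.

(** [|a x - b y| <= |x - y| + (1 - a) + (1 - b)] for [a, b] in [0, 1] and
    [|x|, |y| <= 1]: a jump of scaled directions is controlled by the turn
    of the directions and the two scaling defects. *)
Lemma scaled_difference_bound a b x y : 0 <= a <= 1 -> 0 <= b <= 1 -> Rabs x <= 1 -> Rabs y <= 1 ->
  Rabs (a * x - b * y) <= Rabs (x - y) + (1 - a) + (1 - b).
Proof.
  intros Ha Hb Hx Hy.
  replace (a * x - b * y) with (a * (x - y) + (a - b) * y) by ring.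
  eapply Rle_trans; [apply Rabs_triang |]. rewrite !Rabs_mult.
  assert (Rabs a <= 1) by (rewrite Rabs_right; lra).
  assert (Rabs (a - b) <= (1 - a) + (1 - b)) by (apply Rabs_le; lra).
  assert (H1 := Rabs_pos (x - y)). assert (H2 := Rabs_pos a). assert (H3 := Rabs_pos (a - b)).
  nra.
Qed.

Lemma dot_psub w p q : dot w (psub p q) = dot w p - dot w q.
Proof. unfold dot, psub; simpl; ring. Qed.

Lemma dot_unit_le w p : pnorm w = 1 -> Rabs (dot w p) <= pnorm p.
Proof. intros Hw. rewrite <- (Rmult_1_l (pnorm p)), <- Hw. apply cauchy_schwarz. Qed.

Section ArcLength.
Variables (z : R -> pt) (L M : R).
Hypothesis HL : 0 < L.
Hypothesis z_injective : forall x y, 0 <= x <= L -> 0 <= y <= L -> x < y -> z y <> z x.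
Hypothesis z_length : forall t1 t2, 0 <= t1 -> t1 < t2 -> t2 <= L -> is_length z t1 t2 (t2 - t1).
Hypothesis z_rotation : forall u m, partition 0 L u m -> abs_rotation z u m <= M.

Lemma z_lipschitz x y : 0 <= x -> x < y -> y <= L -> pnorm (psub (z y) (z x)) <= y - x.
Proof. intros Hx Hxy Hy. apply chord_le_length; auto. Qed.

Section GridOnArc.
Variable n : nat.
Hypothesis Hn : (1 <= n)%nat.

Definition grid_edge (k : nat) : pt := edge z (node L n) k.
Definition chord_ratio (k : nat) : R := pnorm (grid_edge k) / mesh L n.

Lemma grid_edge_nonzero k : (k < n)%nat -> 0 < pnorm (grid_edge k).
Proof.
  intros Hk. destruct (cell_in_range L n HL Hn k Hk) as [H0 H1].
  assert (HS := node_S L n k). assert (Hd := mesh_pos L n HL Hn).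
  apply pnorm_psub_pos, z_injective; lra.
Qed.

Lemma chord_ratio_bounds k : (k < n)%nat -> 0 <= chord_ratio k <= 1.
Proof.
  intros Hk. destruct (cell_in_range L n HL Hn k Hk) as [H0 H1].
  assert (HS := node_S L n k). assert (Hd := mesh_pos L n HL Hn).
  assert (Hlip := z_lipschitz (node L n k) (node L n (S k)) H0 ltac:(lra) H1).
  assert (Hpos := pnorm_nonneg (grid_edge k)). unfold chord_ratio, grid_edge, edge in *.
  split; [unfold Rdiv; apply Rmult_le_pos; [lra | left; apply Rinv_0_lt_compat; lra] |].
  apply (Rmult_le_reg_r (mesh L n)); [lra |].
  unfold Rdiv. rewrite Rmult_assoc, Rinv_l, Rmult_1_r, Rmult_1_l by lra. lra.
Qed.

(** The defect [1 - chord_ratio k] of a cell is, up to [eps], the rotation of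
    a broken line inscribed in that cell: choose one almost as long as the
    cell and apply the chord-arc inequality. *)
Lemma cell_defect k eps : (k < n)%nat -> 0 < eps ->
  exists u m, partition (node L n k) (node L n (S k)) u m /\
              1 - chord_ratio k <= abs_rotation z u m + eps.
Proof.
  intros Hk He. assert (Hd := mesh_pos L n HL Hn).
  destruct (cell_in_range L n HL Hn k Hk) as [H0 H1]. assert (HS := node_S L n k).
  assert (Hl := z_length (node L n k) (node L n (S k)) H0 ltac:(lra) H1).
  replace (node L n (S k) - node L n k) with (mesh L n) in Hl by lra.
  assert (Hlong : exists u m, partition (node L n k) (node L n (S k)) u m /\
                             mesh L n * (1 - eps) < polylen z u m).
  { apply NNPP. intros Hno. destruct Hl as [_ Hlub].
    enough (mesh L n <= mesh L n * (1 - eps)) by nra.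
    apply Hlub. intros v [u [m [Hp Hv]]]. subst v.
    apply Rnot_lt_le. intros Hlt. apply Hno. exists u, m. auto. }
  destruct Hlong as [u [m [Hp Hlen]]]. exists u, m. split; auto.
  assert (Hnz : forall i, (i < m)%nat -> 0 < pnorm (edge z u i)).
  { intros i Hi. apply pnorm_psub_pos, z_injective.
    - assert (H := partition_range _ _ u m i Hp ltac:(lia)). lra.
    - assert (H := partition_range _ _ u m (S i) Hp ltac:(lia)). lra.
    - destruct Hp as [_ [_ [_ Hinc]]]. auto. }
  assert (Hca := chord_arc z _ _ u m Hp Hnz).
  assert (Hr0 := abs_rotation_nonneg z u m).
  assert (Hrat := chord_ratio_bounds k Hk).
  unfold chord_ratio, grid_edge, edge in *.
  set (r := abs_rotation z u m) in *. set (ch := pnorm (psub (z (node L n (S k))) (z (node L n k)))) in *.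
  destruct (Rle_dec 1 r); [lra |]. destruct (Rle_dec 1 eps); [lra |].
  assert ((1 - r) * (mesh L n * (1 - eps)) <= ch).
  { eapply Rle_trans; [| apply Hca]. apply Rmult_le_compat_l; lra. }
  assert ((1 - r) * (1 - eps) <= ch / mesh L n).
  { apply (Rmult_le_reg_r (mesh L n)); auto. replace (ch / mesh L n * mesh L n) with ch by (field; lra).
    lra. }
  nra.
Qed.

(** Gluing the broken lines of the first [j] cells: the total defect is
    bounded by the rotation of the whole arc, plus [1] for the [eps]'s. *)
Lemma total_defect : rsum (fun k => 1 - chord_ratio k) 0 n <= M + 1.
Proof.
  set (eps := / INR n).
  assert (Hn0 : 0 < INR n) by (apply lt_0_INR; lia).
  assert (He : 0 < eps) by (apply Rinv_0_lt_compat; auto).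
  assert (Claim : forall j, (1 <= j <= n)%nat -> exists u m, partition 0 (node L n j) u m /\
     rsum (fun k => 1 - chord_ratio k) 0 j <= abs_rotation z u m + INR j * eps).
  { intros j Hj. induction j as [| j IH]; [lia |].
    destruct (Nat.eq_dec j 0) as [E | E].
    - subst j. destruct (cell_defect 0 eps ltac:(lia) He) as [u [m [Hp Hb]]].
      rewrite node_0 in Hp. exists u, m. split; auto. unfold rsum; simpl. lra.
    - destruct IH as [u1 [m1 [Hp1 Hb1]]]; [lia |].
      destruct (cell_defect j eps ltac:(lia) He) as [u2 [m2 [Hp2 Hb2]]].
      exists (glue u1 u2 m1), (m1 + m2)%nat. split; [eapply glue_partition; eauto |].
      assert (G := glue_rotation z _ _ _ u1 m1 u2 m2 Hp1 Hp2).
      rewrite rsum_last, S_INR by lia. lra. }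
  destruct (Claim n ltac:(lia)) as [u [m [Hp Hb]]].
  rewrite (node_n L n Hn) in Hp. specialize (z_rotation u m Hp).
  replace (INR n * eps) with 1 in Hb by (unfold eps; field; lra). lra.
Qed.

Variable w : pt.
Hypothesis w_unit : pnorm w = 1.

Definition coord (s : R) : R := dot w (z s).

Lemma coord_slope k : (k < n)%nat -> slope coord L n k = chord_ratio k * dot w (dir z (node L n) k).
Proof.
  intros Hk. assert (H0 := grid_edge_nonzero k Hk).
  unfold slope, coord, chord_ratio, dir, grid_edge, edge, unitv in *.
  rewrite <- dot_psub. unfold dot, psub in *; simpl in *. field. split; [lra |].
  apply Rgt_not_eq, mesh_pos; auto.
Qed.

Lemma coord_jump_le k : (1 <= k < n)%nat -> Rabs (jump coord L n k) <=
  angle (grid_edge (pred k)) (grid_edge k) + (1 - chord_ratio k) + (1 - chord_ratio (pred k)).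
Proof.
  intros Hk. unfold jump. rewrite !coord_slope by lia.
  assert (Hdir : forall i, (i < n)%nat -> Rabs (dot w (dir z (node L n) i)) <= 1).
  { intros i Hi. eapply Rle_trans; [apply dot_unit_le; auto |].
    rewrite unit_pnorm; [lra | apply unitv_dot, grid_edge_nonzero; auto]. }
  assert (Hturn : Rabs (dot w (dir z (node L n) k) - dot w (dir z (node L n) (pred k)))
                  <= angle (grid_edge (pred k)) (grid_edge k)).
  { rewrite <- dot_psub. eapply Rle_trans; [apply dot_unit_le; auto |].
    apply unitv_dist_le_angle; apply grid_edge_nonzero; lia. }
  assert (H := scaled_difference_bound _ _ _ _ (chord_ratio_bounds k ltac:(lia))
                 (chord_ratio_bounds (pred k) ltac:(lia)) (Hdir k ltac:(lia)) (Hdir (pred k) ltac:(lia))).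
  lra.
Qed.

Lemma coord_jump_variation : rsum (fun k => Rabs (jump coord L n k)) 1 n <= 3 * M + 2.
Proof.
  eapply Rle_trans; [apply rsum_le; intros k Hk; apply coord_jump_le; lia |].
  rewrite !rsum_plus.
  assert (Hrat : forall k, (k < n)%nat -> 0 <= 1 - chord_ratio k)
    by (intros k Hk; assert (H := chord_ratio_bounds k Hk); lra).
  assert (R1 : rsum (fun k => angle (grid_edge (pred k)) (grid_edge k)) 1 n <= M).
  { unfold grid_edge. rewrite <- (abs_rotation_edges z (node L n) n). apply z_rotation, node_partition; auto. }
  assert (S0 := total_defect).
  assert (R2 : rsum (fun k => 1 - chord_ratio k) 1 n <= M + 1).
  { rewrite (rsum_first _ 0 n) in S0 by lia. assert (H := Hrat 0%nat ltac:(lia)). lra. }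
  assert (R3 : rsum (fun k => 1 - chord_ratio (pred k)) 1 n <= M + 1).
  { destruct n as [| n']; [lia |].
    replace 1%nat with (1 + 0)%nat by lia. replace (S n') with (1 + n')%nat by lia.
    rewrite rsum_shift. simpl. rewrite (rsum_last _ 0 n') in S0 by lia.
    assert (H := Hrat n' ltac:(lia)). lra. }
  lra.
Qed.

End GridOnArc.

Lemma coord_lipschitz w : pnorm w = 1 ->
  forall x y, 0 <= x <= L -> 0 <= y <= L -> Rabs (coord w x - coord w y) <= Rabs (x - y).
Proof.
  intros Hw.
  assert (Half : forall x y, 0 <= x -> x < y -> y <= L -> Rabs (coord w y - coord w x) <= y - x).
  { intros x y Hx Hxy Hy. unfold coord. rewrite <- dot_psub.
    eapply Rle_trans; [apply dot_unit_le; auto | apply z_lipschitz; auto]. }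
  intros x y Hx Hy. destruct (Rtotal_order x y) as [H | [H | H]].
  - rewrite Rabs_minus_sym, (Rabs_minus_sym x), (Rabs_right (y - x)) by lra. apply Half; lra.
  - subst. rewrite !Rminus_diag, Rabs_R0. lra.
  - rewrite (Rabs_right (x - y)) by lra. apply Half; lra.
Qed.

Lemma coord_delta_convex w : pnorm w = 1 -> delta_convex_on 0 L (coord w).
Proof.
  intros Hw. apply (delta_convex_of_bounded_jumps _ L (3 * M + 2) HL).
  - apply coord_lipschitz; auto.
  - intros n Hn. apply coord_jump_variation; auto.
Qed.

End ArcLength.

(** The arc length parameterization [z = gamma o phi] of an arc inherits
    injectivity and the rotation bound from [gamma]: [phi] is increasing, so
    partitions of [0, L] are carried to partitions of [a, b] with the same
    inscribed broken lines. *)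
Section Reparameterization.
Variables (gamma : R -> pt) (a b : R) (z : R -> pt) (L : R) (phi : R -> R).
Hypothesis gamma_injective :
  forall x y, a <= x <= b -> a <= y <= b -> gamma x = gamma y -> x = y.
Hypotheses (phi_0 : phi 0 = a) (phi_L : phi L = b).
Hypothesis phi_increasing : forall s1 s2, 0 <= s1 -> s1 < s2 -> s2 <= L -> phi s1 < phi s2.
Hypothesis z_def : forall s, 0 <= s <= L -> z s = gamma (phi s).

Lemma phi_range s : 0 <= s <= L -> a <= phi s <= b.
Proof.
  intros [H0 HL]. rewrite <- phi_0, <- phi_L. split.
  - destruct (Rle_lt_or_eq_dec _ _ H0) as [Hlt | <-]; [left; apply phi_increasing |]; lra.
  - destruct (Rle_lt_or_eq_dec _ _ HL) as [Hlt | ->]; [left; apply phi_increasing |]; lra.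
Qed.

Lemma param_injective x y : 0 <= x <= L -> 0 <= y <= L -> x < y -> z y <> z x.
Proof.
  intros Hx Hy Hxy E. rewrite !z_def in E by auto.
  apply gamma_injective in E; try (apply phi_range; auto).
  assert (phi x < phi y) by (apply phi_increasing; lra). lra.
Qed.

Lemma param_rotation M : (forall t n, partition a b t n -> abs_rotation gamma t n <= M) ->
  forall u m, partition 0 L u m -> abs_rotation z u m <= M.
Proof.
  intros HM u m Hp. assert (Hr := partition_range 0 L u m).
  assert (Hv : partition a b (fun i => phi (u i)) m).
  { pose proof Hp as [H1 [H2 [H3 H4]]].
    split; [auto | split; [rewrite H2; auto | split; [rewrite H3; auto |]]].
    intros i Hi. assert (A1 := Hr i Hp ltac:(lia)). assert (A2 := Hr (S i) Hp ltac:(lia)).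
    apply phi_increasing; try lra. apply H4; auto. }
  eapply Rle_trans; [| apply (HM _ _ Hv)]. apply Req_le, rsum_ext. intros i Hi.
  rewrite !z_def by (apply Hr; auto; lia). reflexivity.
Qed.

End Reparameterization.

(** A nondegenerate arc has positive length: it is at least the chord. *)
Lemma arc_length_pos gamma a b L : is_arc gamma a b -> is_length gamma a b L -> 0 < L.
Proof.
  intros [Hab [_ Hinj]] Hlen. eapply Rlt_le_trans; [| apply (chord_le_length gamma a b L Hab Hlen)].
  apply pnorm_psub_pos. intros E. apply Hinj in E; lra.
Qed.

Lemma delta_convex_on_ext a b h1 h2 : (forall s, a <= s <= b -> h1 s = h2 s) ->
  delta_convex_on a b h1 -> delta_convex_on a b h2.
Proof.
  intros E [g [f [Hg [Hgc [Hf [Hfc Hd]]]]]]. exists g, f.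
  repeat split; auto. intros s Hs. rewrite <- E by auto. auto.
Qed.

Lemma pnorm_e1 : pnorm (1, 0) = 1.
Proof. apply unit_pnorm. unfold dot; simpl; ring. Qed.

Lemma pnorm_e2 : pnorm (0, 1) = 1.
Proof. apply unit_pnorm. unfold dot; simpl; ring. Qed.

Theorem proposition2p10 (gamma : R -> pt) (a b : R) (z : R -> pt) (L : R) :
  is_arc gamma a b ->
  bounded_rotation gamma a b ->
  is_length gamma a b L ->
  arc_length_param gamma a b z L ->
  delta_convex_on 0 L (fun s => fst (z s)) /\
  delta_convex_on 0 L (fun s => snd (z s)).
Proof.
  intros Harc [M HM] HlenG [[phi [Hp0 [HpL [_ [Hmono Hz]]]]] Hlen].
  assert (HL := arc_length_pos gamma a b L Harc HlenG).
  destruct Harc as [_ [_ Hinj]].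
  assert (Hzinj := param_injective gamma a b z L phi Hinj Hp0 HpL Hmono Hz).
  assert (Hrot := param_rotation gamma a b z L phi Hp0 HpL Hmono Hz M HM).
  split; [eapply delta_convex_on_ext; [| apply (coord_delta_convex z L M HL Hzinj Hlen Hrot (1, 0) pnorm_e1)]
         | eapply delta_convex_on_ext; [| apply (coord_delta_convex z L M HL Hzinj Hlen Hrot (0, 1) pnorm_e2)]];
    intros s _; unfold coord, dot; simpl; ring.
Qed.
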